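(* If $(G,\phi,\tau)$ is an optimal solution to the problem (RE) of maximizing $\phi_t+\phi_d(1-G(\tau))$ over all $(G,\phi,\tau)$ with $G$ a distribution on $[\underline{\theta},\overline{\theta}]$, $\phi=(\phi_t,\phi_d)\in\mathbb{R}^2$, $\tau\in\mathbb{R}$, subject to (w-P), (w-HE) and $E_G[s]=\mu$, then $G(s)=G(\mu+\phi_d)$ for all $s\in[\mu+\phi_d,\overline{\theta})$.
   Context: $F$ is a distribution with lowest and highest support points $0\le\underline{\theta}<\overline{\theta}<\infty$ and mean $\mu$. For a CDF $G$ on $[\underline{\theta},\overline{\theta}]$ and fees $(\phi_t,\phi_d)$: (w-P) means $\phi_t\le\int_{\mu+\phi_d}^{\overline{\theta}}[s-(\mu+\phi_d)]dG(s)$; (w-HE) for a threshold $\tau$ means $\tau-\phi_d=E_G[s\mid s\le\tau]$ and $\tau'-\phi_d\ge E_G[s\mid s\le\tau']$ for all $\tau'>\tau$. *)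

From HB Require Import structures.
From mathcomp Require Import all_boot all_order all_algebra.
From mathcomp Require Import all_classical all_reals all_analysis.
Set Implicit Arguments. Unset Strict Implicit. Unset Printing Implicit Defensive.
Import Order.TTheory GRing.Theory Num.Theory.
Local Open Scope classical_set_scope.
Local Open Scope ring_scope.

Section Defs.
Variable R : realType.

(* A "distribution G" is a probability measure on the Borel sets of R;
   its CDF is G(x) = P((-oo, x]). *)
Definition cdfG (P : probability R R) (x : R) : R := fine (P [set` `]-oo, x]]).

Definition supported_on (P : probability R R) (a b : R) : Prop :=
  P [set` `[a, b]] = 1%E.

Definition meanG (P : probability R R) : R := Rintegral P setT (fun s => s).

Definition condexp_le (P : probability R R) (t : R) : R :=
  Rintegral P [set` `]-oo, t]] (fun s => s) / cdfG P t.

Definition wP (P : probability R R) (mu thh pt pd : R) : Prop :=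
  pt <= Rintegral P [set` `[mu + pd, thh]] (fun s => s - (mu + pd)).

(* (w-HE) for threshold t; the conditional expectation is required to be
   well defined, i.e. G(t) > 0 (then also G(t') > 0 for t' > t). *)
Definition wHE (P : probability R R) (pd t : R) : Prop :=
  [/\ 0 < cdfG P t,
      t - pd = condexp_le P t &
      forall t', t < t' -> condexp_le P t' <= t' - pd].

Definition feasibleRE (thl thh mu : R) (P : probability R R) (pt pd t : R) : Prop :=
  [/\ supported_on P thl thh, wP P mu thh pt pd, wHE P pd t & meanG P = mu].

Definition objRE (P : probability R R) (pt pd t : R) : R :=
  pt + pd * (1 - cdfG P t).

End Defs.

(* Let c = mu + phi_d and suppose G(s) > G(c) for some s in [c, thbar).  By
   right-continuity G puts a positive mass m on A = ]c + e, s], whose first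
   moment I exceeds c m.  Spread this mass onto two points, x slightly below c
   and thbar, keeping its total and its first moment, hence the mean mu.
   Nothing changes below x, so tau still satisfies (w-HE) with equality; for
   thresholds in [x, c) the excess I - c m pays for the mass added at x, and
   beyond c the inequality holds for every distribution with mean mu and
   phi_d >= 0.  The (w-P) integral over [c, thbar] grows by w1 (c - x) > 0
   while G(tau) is unchanged, so raising phi_t to the new (w-P) bound yields a
   feasible point with a larger objective. *)

From HB Require Import structures.
From mathcomp Require Import all_boot all_order all_algebra.
From mathcomp Require Import all_classical all_reals all_analysis.
From mathcomp Require Import measurable_realfun ring lra.
Import Order.TTheory GRing.Theory Num.Theory.
Set Implicit Arguments. Unset Strict Implicit.
Local Open Scope ring_scope.
Local Open Scope classical_set_scope.

Definition mass (R : realType) (Q : probability R R) (D : set R) : R := fine (Q D).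

Definition moment (R : realType) (Q : probability R R) (D : set R) : R :=
  Rintegral Q D (fun s => s).

Section mass.
Variables (R : realType) (Q : probability R R).

Lemma cdfGE u : cdfG Q u = mass Q `]-oo, u].
Proof. by []. Qed.

Lemma mass_ge0 D : 0 <= mass Q D.
Proof. exact: fine_ge0. Qed.

Lemma le_mass D E : measurable D -> measurable E -> D `<=` E ->
  mass Q D <= mass Q E.
Proof.
by move=> mD mE DE; rewrite fine_le ?fin_num_measure// le_measure ?inE.
Qed.

Lemma mass0 : mass Q set0 = 0.
Proof. by rewrite /mass measure0. Qed.

Lemma massT : mass Q setT = 1.
Proof. by rewrite /mass probability_setT. Qed.

Lemma mass_le1 D : measurable D -> mass Q D <= 1.
Proof.
by move=> mD; rewrite -massT le_mass.
Qed.

Lemma massID D E : measurable D -> measurable E ->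
  mass Q D = mass Q (D `&` E) + mass Q (D `\` E).
Proof.
move=> mD mE; rewrite /mass (measureDI Q mD mE) addrC fineD//.
- exact/fin_num_measure/measurableI.
- exact/fin_num_measure/measurableD.
Qed.

Lemma mass_disjoint_le1 D E : measurable D -> measurable E -> D `<=` ~` E ->
  mass Q D + mass Q E <= 1.
Proof.
move=> mD mE /disjoints_subset DE0.
rewrite -fineD ?fin_num_measure// -measureU// -/(mass Q _).
by apply: mass_le1; exact: measurableU.
Qed.

Lemma le_cdfG : nondecreasing (cdfG Q).
Proof.
move=> u v uv; rewrite !cdfGE le_mass//.
by move=> z /=; rewrite !in_itv/= => /le_trans; apply.
Qed.

Lemma cdfG_right_continuous c v : cdfG Q c < v ->
  exists2 e, 0 < e & cdfG Q (c + e) < v.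
Proof.
move=> cv; apply: contrapT => /forall2NP noe.
have cvg_c : Q `]-oo, c + n.+1%:R^-1] @[n --> \oo] --> Q `]-oo, c].
  rewrite (itvNycEbigcap false c).
  apply: (@nonincreasing_cvg_mu _ _ _ Q (fun n => `]-oo, c + n.+1%:R^-1])).
  - by rewrite (le_lt_trans (probability_le1 _ _)) ?ltry.
  - by move=> n; exact: measurable_itv.
  - by apply: bigcap_measurable => // n _; exact: measurable_itv.
  - move=> m n mn; apply/subsetPset => z /=; rewrite !in_itv /= => /le_trans; apply.
    by rewrite lerD2l lef_pV2 ?posrE// ler_nat.
have : (v%:E <= Q `]-oo, c])%E.
  apply: (cvge_to_ge cvg_c); apply: nearW => n.
  have [|/negP] := noe n.+1%:R^-1; first by rewrite invr_gt0.
  rewrite -leNgt => le_v.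
  by rewrite -(@fineK _ (Q _)) ?lee_fin// fin_num_measure.
by rewrite -(@fineK _ (Q _)) ?lee_fin ?fin_num_measure// leNgt cv.
Qed.

End mass.

Lemma moment0 (R : realType) (Q : probability R R) : moment Q set0 = 0.
Proof. exact: Rintegral_set0. Qed.

Lemma wHE_moment (R : realType) (Q : probability R R) pd t : wHE Q pd t ->
  moment Q `]-oo, t] = (t - pd) * mass Q `]-oo, t].
Proof. by case=> Ft_gt0 -> _; rewrite divfK ?gt_eqF. Qed.

Section supported_moment.
Variables (R : realType) (a b : R) (Q : probability R R).
Hypothesis Qab : supported_on Q a b.
Implicit Types (D E : set R) (u k pd t : R).

Let mab : measurable `[a, b]. Proof. exact: measurable_itv. Qed.

Lemma supported_on_setC : Q (~` `[a, b]) = 0%E.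
Proof. by rewrite probability_setC// Qab subee. Qed.

Lemma integrable_id D : measurable D -> Q.-integrable D (EFin \o id).
Proof.
move=> mD; apply/(negligible_integrable (measurableC mab) mD) => //.
- exact/measurable_EFinP.
- exact: supported_on_setC.
have mDab := measurableD mD (measurableC mab).
apply: measurable_bounded_integrable => //.
  by rewrite (le_lt_trans (probability_le1 _ _)) ?ltry.
exists (Num.max `|a| `|b|); split; first by rewrite num_real.
move=> M maxM s [_ /= /contrapT]; rewrite in_itv/= => /andP[las lsb].
apply/ltW/(le_lt_trans _ maxM).
rewrite le_max; have [s0|s0] := leP 0 s.
  by apply/orP; right; rewrite ger0_norm// (le_trans lsb)// ler_norm.
by apply/orP; left; rewrite ltr0_norm// ler0_norm ?lerN2// (le_trans las) ?ltW.
Qed.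

Lemma momentID D E : measurable D -> measurable E ->
  moment Q D = moment Q (D `&` E) + moment Q (D `\` E).
Proof.
move=> mD mE; rewrite /moment -Rintegral_setU ?setUIDK//.
- exact: measurableI.
- exact: measurableD.
- exact: integrable_id.
- by apply/disj_setPS => x [[_ Ex] [_ nEx]].
Qed.

Lemma moment_supported D : measurable D -> moment Q D = moment Q (D `&` `[a, b]).
Proof.
move=> mD; rewrite /moment /Rintegral.
rewrite (negligible_integral (measurableC mab) mD) ?setDE ?setCK//.
- exact: integrable_id.
- exact: supported_on_setC.
Qed.

Lemma moment_ge u D : measurable D -> (forall s, D s -> u <= s) ->
  u * mass Q D <= moment Q D.
Proof.
move=> mD Du; rewrite /moment /mass -Rintegral_cst//.
apply: le_Rintegral => //; first exact: finite_measure_integrable_cst.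
exact: integrable_id.
Qed.

Lemma moment_le u D : measurable D -> (forall s, D s -> s <= u) ->
  moment Q D <= u * mass Q D.
Proof.
move=> mD Du; rewrite /moment /mass -Rintegral_cst//.
apply: le_Rintegral => //; first exact: integrable_id.
exact: finite_measure_integrable_cst.
Qed.

Lemma Rintegral_subr k D : measurable D ->
  Rintegral Q D (fun s => s - k) = moment Q D - k * mass Q D.
Proof.
move=> mD; rewrite /moment /mass -Rintegral_cst// RintegralB//.
- exact: integrable_id.
- exact: finite_measure_integrable_cst.
Qed.

Lemma meanG_ge u A : measurable A -> A `<=` ~` `]-oo, u] ->
  moment Q `]-oo, u] + u * (1 - mass Q `]-oo, u] - mass Q A) + moment Q A
  <= meanG Q.
Proof.
move=> mA Au; rewrite -[meanG Q]/(moment Q setT).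
have mu : measurable `]-oo, u] by exact: measurable_itv.
have mCu := measurableC mu.
have := momentID measurableT mu; rewrite setTI setTD => ->.
have := massID Q measurableT mu; rewrite setTI setTD massT => split_mass.
rewrite (momentID mCu mA) (massID Q mCu mA) (setIidr Au) in split_mass *.
have -> : 1 - mass Q `]-oo, u] - mass Q A = mass Q (~` `]-oo, u] `\` A) by lra.
have : u * mass Q (~` `]-oo, u] `\` A) <= moment Q (~` `]-oo, u] `\` A).
  apply: moment_ge; first exact: measurableD.
  by move=> s [/=]; rewrite in_itv/= => /negP; rewrite -ltNge => /ltW.
lra.
Qed.

Lemma meanG_ge_ray u :
  moment Q `]-oo, u] + u * (1 - mass Q `]-oo, u]) <= meanG Q.
Proof.
have := meanG_ge (u := u) measurable0 (@sub0set _ _).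
by rewrite mass0 moment0 subr0 addr0.
Qed.

Lemma moment_ray_le_ge_mean pd u : 0 <= pd -> meanG Q + pd <= u ->
  moment Q `]-oo, u] <= (u - pd) * mass Q `]-oo, u].
Proof.
move=> pd0 upd; have mu : measurable `]-oo, u] by exact: measurable_itv.
have := meanG_ge_ray u; have := mass_le1 Q mu.
set F := mass Q _ => F_le1.
have : 0 <= pd * (1 - F) by rewrite mulr_ge0// subr_ge0.
lra.
Qed.

Lemma cdfG_gt0_ge u : 0 < cdfG Q u -> a <= u.
Proof.
rewrite leNgt; apply: contraTN => ua; rewrite cdfGE /mass.
suff -> : Q `]-oo, u] = 0%E by rewrite ltxx.
apply: (subset_measure0 _ (measurableC mab) _ supported_on_setC).
  exact: measurable_itv.
move=> s /=; rewrite !in_itv/= => su /andP[a_s _].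
by move: (le_lt_trans a_s (le_lt_trans su ua)); rewrite ltxx.
Qed.

Lemma wHE_pd_ge0 pd t : wHE Q pd t -> 0 <= pd.
Proof.
move=> HE; have [Ft_gt0 _ _] := HE; have := wHE_moment HE.
have mt : measurable `]-oo, t] by exact: measurable_itv.
have := moment_le (u := t) mt (fun s => id).
rewrite cdfGE in Ft_gt0; nra.
Qed.

Lemma wHE_le_mean pd t : wHE Q pd t -> t <= meanG Q + pd.
Proof.
move=> HE; have pd0 := wHE_pd_ge0 HE.
have mt : measurable `]-oo, t] by exact: measurable_itv.
have := meanG_ge_ray t; rewrite (wHE_moment HE); have := mass_le1 Q mt.
set F := mass Q _ => F_le1.
have : 0 <= pd * (1 - F) by rewrite mulr_ge0// subr_ge0.
lra.
Qed.

Lemma wHE_excess_le pd t A : wHE Q pd t -> measurable A ->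
  A `<=` ~` `]-oo, meanG Q + pd] ->
  moment Q A - (meanG Q + pd) * mass Q A <= (meanG Q + pd - t) * (1 - mass Q A).
Proof.
move=> HE mA A_gt; have pd0 := wHE_pd_ge0 HE; have t_le := wHE_le_mean HE.
have mt : measurable `]-oo, t] by exact: measurable_itv.
have A_gt_t : A `<=` ~` `]-oo, t].
  move=> s /A_gt/= /negP; rewrite !in_itv/= -ltNge => /(le_lt_trans t_le) ts.
  by apply/negP; rewrite -ltNge.
have := meanG_ge mA A_gt_t; rewrite (wHE_moment HE).
have := mass_le1 Q mt.
set F := mass Q `]-oo, t] => F_le1.
have : 0 <= pd * (1 - F) by rewrite mulr_ge0// subr_ge0.
lra.
Qed.

End supported_moment.

Lemma condexp_le_leP (R : realType) (Q : probability R R) u v :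
  0 < cdfG Q u ->
  (condexp_le Q u <= v) = (moment Q `]-oo, u] <= v * mass Q `]-oo, u]).
Proof. by move=> Fu_gt0; rewrite /condexp_le ler_pdivrMr. Qed.

Lemma mnormalize_setT1 d (T : measurableType d) (R : realType)
  (mu : {measure set T -> \bar R}) (P : probability T R) :
  mu setT = 1%E -> mnormalize mu P = mu.
Proof.
by move=> mu1; apply/funext => D; rewrite /mnormalize mu1 onee_eq0/= invr1 mule1.
Qed.

Lemma integral_mrestr d (T : measurableType d) (R : realType)
  (mu : {measure set T -> \bar R}) (E D : set T) (mE : measurable E)
  (f : T -> \bar R) : measurable D -> measurable_fun D f ->
  (\int[mrestr mu mE]_(x in D) f x = \int[mu]_(x in D `&` E) f x)%E.
Proof.
move=> mD mf; rewrite -{1}(setUIDK D E) integral_setU ?setUIDK//; first last.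
- by apply/disj_setPS => z [[_ Ez] [_ nEz]].
- exact: measurableD.
- exact: measurableI.
rewrite (eq_measure_integral mu) => [|B mB BDE]; last first.
  by rewrite /= /mrestr setIidl// => z /BDE[].
rewrite [X in (_ + X)%E](eq_measure_integral mzero) ?integral_measure_zero ?adde0//.
move=> B mB BDE; rewrite /= /mrestr.
suff -> : B `&` E = set0 by rewrite measure0.
by apply/disjoints_subset => z /BDE[].
Qed.

(* Moments are computed with the nonnegative integral, hence [0 <= a]. *)
Section spread.
Variables (R : realType) (a b : R) (P : probability R R).
Variables (A : set R) (x y w1 w2 : R).
Hypotheses (a_ge0 : 0 <= a) (Pab : supported_on P a b).
Hypotheses (mA : measurable A) (Aab : A `<=` `[a, b]).
Hypotheses (xab : `[a, b] x) (yab : `[a, b] y).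
Hypotheses (w1_ge0 : 0 <= w1) (w2_ge0 : 0 <= w2) (massA : mass P A = w1 + w2).
Implicit Types D : set R.

Let spread := measure_add (mrestr P (measurableC mA))
  (measure_add (mscale (NngNum w1_ge0) \d_x) (mscale (NngNum w2_ge0) \d_y)).

Let spreadE D :
  spread D = (P (D `\` A) + w1%:E * \d_x D + w2%:E * \d_y D)%E.
Proof.
rewrite /spread measure_addE -addeA setDE; congr (_ + _)%E.
exact: measure_addE.
Qed.

Let spread_setT : spread setT = 1%E.
Proof.
rewrite spreadE setTD !diracE !in_setT mule1 mule1.
have -> : P (~` A) = (1 - mass P A)%:E.
  by rewrite probability_setC// -[P A]fineK ?fin_num_measure.
by rewrite massA -!EFinD; congr EFin; lra.
Qed.

Let integral_spread D : measurable D -> (forall s, D s -> 0 <= s) ->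
  (\int[spread]_(s in D) s%:E = \int[P]_(s in D `\` A) s%:E
     + w1%:E * (\d_x D * x%:E) + w2%:E * (\d_y D * y%:E))%E.
Proof.
move=> mD D_ge0.
have mid : measurable_fun D (fun s : R => s%:E) by exact/measurable_EFinP.
have D_ge0' s : D s -> (0 <= s%:E)%E by move/D_ge0; rewrite lee_fin.
rewrite /spread !ge0_integral_measure_add// !ge0_integral_mscale//.
by rewrite !integral_dirac// addeA integral_mrestr// setDE.
Qed.

(* [spread] has total mass 1: normalizing only equips it with a probability
   structure. *)
Let spreadP : probability R R := mnormalize spread P.

Let spreadPE D : spreadP D = spread D.
Proof. by rewrite /spreadP /= mnormalize_setT1. Qed.

Let mass_spreadP D : measurable D ->
  mass spreadP D + mass P (D `&` A) = mass P D + w1 * \1_D x + w2 * \1_D y.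
Proof.
move=> mD; rewrite (massID P mD mA) /mass spreadPE spreadE.
rewrite -[P (D `\` A)]fineK ?fin_num_measure//; last exact: measurableD.
by rewrite !diracE -!indicE -!EFinM -!EFinD /=; lra.
Qed.

Let supported_spreadP : supported_on spreadP a b.
Proof.
have mab : measurable `[a, b] by exact: measurable_itv.
have := mass_spreadP mab; rewrite setIidr// !indicE !mem_set// !mulr1.
have -> : mass P `[a, b] = 1 by rewrite /mass Pab.
rewrite massA => mass1.
rewrite /supported_on -[spreadP _]fineK ?fin_num_measure//.
by congr EFin; change (mass spreadP `[a, b] = 1); lra.
Qed.

Let moment_spreadP D : measurable D ->
  moment spreadP D + moment P (D `&` A) =
  moment P D + w1 * \1_D x * x + w2 * \1_D y * y.
Proof.
move=> mD; have mab : measurable `[a, b] by exact: measurable_itv.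
have Dab_ge0 s : (D `&` `[a, b]) s -> 0 <= s.
  by case=> _; rewrite /= in_itv/= => /andP[/(le_trans a_ge0)].
have in_ab z : `[a, b] z -> \1_(D `&` `[a, b]) z = \1_D z :> R.
  by move=> abz; rewrite !indicE in_setI (mem_set abz) andbT.
rewrite (moment_supported supported_spreadP mD) (momentID Pab mD mA).
rewrite (moment_supported Pab (measurableD mD mA)) setIDAC setIDA.
rewrite /moment /Rintegral (eq_measure_integral spread) => [|B mB _]; last first.
  exact: spreadPE.
have mDabA : measurable (D `&` `[a, b] `\` A).
  by apply: measurableD => //; exact: measurableI.
rewrite integral_spread//; last exact: measurableI.
rewrite -[(\int[P]_(s in D `&` `[a, b] `\` A) _)%E]fineK; last first.
  exact/(integrable_fin_num mDabA)/(integrable_id Pab).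
by rewrite !diracE -!indicE !in_ab// -!EFinM -!EFinD /=; lra.
Qed.

Lemma spread_exists : exists P' : probability R R,
  [/\ supported_on P' a b,
      forall D, measurable D ->
        mass P' D + mass P (D `&` A) = mass P D + w1 * \1_D x + w2 * \1_D y &
      forall D, measurable D ->
        moment P' D + moment P (D `&` A) =
        moment P D + w1 * \1_D x * x + w2 * \1_D y * y].
Proof.
exists spreadP; split.
- exact: supported_spreadP.
- exact: mass_spreadP.
- exact: moment_spreadP.
Qed.

End spread.

(* [lra] ignores section hypotheses, so they are moved to the goal first. *)
Section spread_feasible.
Variables (R : realType) (thl thh mu pt pd t : R) (P : probability R R).
Hypothesis feasP : feasibleRE thl thh mu P pt pd t.
Local Notation c := (mu + pd).
Variables (A : set R) (x w1 w2 : R).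
Hypotheses (mA : measurable A) (A_sub : A `<=` `]c, thh]).
Hypotheses (t_lt_x : t < x) (x_lt_c : x < c).
Hypothesis x_ge : c - x <= moment P A - c * mass P A.
Hypotheses (w1_gt0 : 0 < w1) (w2_ge0 : 0 <= w2).
Hypotheses (w_mass : w1 + w2 = mass P A) (w_moment : w1 * x + w2 * thh = moment P A).
Variable P' : probability R R.
Hypothesis P'ab : supported_on P' thl thh.
Hypothesis massP' : forall D, measurable D ->
  mass P' D + mass P (D `&` A) = mass P D + w1 * \1_D x + w2 * \1_D thh.
Hypothesis momentP' : forall D, measurable D ->
  moment P' D + moment P (D `&` A) = moment P D + w1 * \1_D x * x + w2 * \1_D thh * thh.

Let Pab : supported_on P thl thh. Proof. by case: feasP. Qed.
Let meanP : meanG P = mu. Proof. by case: feasP. Qed.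
Let HE : wHE P pd t. Proof. by case: feasP. Qed.
Let pd_ge0 : 0 <= pd. Proof. exact: (wHE_pd_ge0 Pab HE). Qed.

Let c_lt_thh : c < thh.
Proof.
have excess : moment P A - c * mass P A = w2 * (thh - c) - w1 * (c - x).
  by rewrite -w_moment -w_mass; ring.
rewrite ltNge; apply/negP => thh_le_c.
have : w2 * (thh - c) <= 0 by rewrite mulr_ge0_le0// subr_le0.
have : 0 < w1 * (c - x) by rewrite mulr_gt0// subr_gt0.
move: (x_ge) (x_lt_c); rewrite excess; lra.
Qed.

Let spread_ray u : u < c ->
  mass P' `]-oo, u] = mass P `]-oo, u] + w1 * \1_(`]-oo, u]) x /\
  moment P' `]-oo, u] = moment P `]-oo, u] + w1 * \1_(`]-oo, u]) x * x.
Proof.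
move=> uc; have mray : measurable `]-oo, u] by exact: measurable_itv.
have noA : `]-oo, u] `&` A = set0.
  apply/disjoints_subset => s /=; rewrite in_itv/= => su /A_sub/=.
  by rewrite in_itv/= => /andP[/(lt_trans (le_lt_trans su uc))]; rewrite ltxx.
have nothh : \1_(`]-oo, u]) thh = 0 :> R.
  rewrite indicE memNset//= in_itv/=; apply/negP.
  by rewrite -ltNge (lt_trans uc c_lt_thh).
have := massP' mray; have := momentP' mray.
rewrite noA nothh mass0 moment0 !mulr0 mul0r !addr0 => -> ->.
by split.
Qed.

Let spread_ray_lt u : u < x ->
  mass P' `]-oo, u] = mass P `]-oo, u] /\ moment P' `]-oo, u] = moment P `]-oo, u].
Proof.
move=> ux; have [-> ->] := spread_ray (lt_trans ux x_lt_c).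
have -> : \1_(`]-oo, u]) x = 0 :> R.
  by rewrite indicE memNset//= in_itv/=; apply/negP; rewrite -ltNge.
by rewrite mulr0 mul0r !addr0.
Qed.

Let spread_ray_mid u : x <= u -> u < c ->
  mass P' `]-oo, u] = mass P `]-oo, u] + w1 /\
  moment P' `]-oo, u] = moment P `]-oo, u] + w1 * x.
Proof.
move=> xu uc; have [-> ->] := spread_ray uc.
by rewrite indicE mem_set/= ?in_itv//= mulr1.
Qed.

Let meanG_spread : meanG P' = mu.
Proof.
have := momentP' measurableT; rewrite setTI !indicE !in_setT/= !mulr1 -w_moment.
rewrite addrA => /addIr/addIr mean_eq.
by rewrite -[meanG P']/(moment P' setT) mean_eq.
Qed.

Let moment_le_spread_mid u : x <= u -> u < c ->
  moment P `]-oo, u] + w1 * x <= (u - pd) * (mass P `]-oo, u] + w1).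
Proof.
move=> xu uc; have mray : measurable `]-oo, u] by exact: measurable_itv.
have Au : A `<=` ~` `]-oo, u].
  move=> s /A_sub/=; rewrite !in_itv/= => /andP[cs _].
  by apply/negP; rewrite -ltNge (lt_trans uc cs).
have := meanG_ge Pab mA Au; rewrite meanP.
have := mass_disjoint_le1 P mA mray Au.
move: (x_ge) (w_mass) (w1_gt0) (w2_ge0) (pd_ge0).
set F := mass P `]-oo, u]; set m := mass P A; set I := moment P A.
move=> ? ? ? ? ? ? ?.
have : 0 <= w1 * (u - x) by rewrite mulr_ge0 ?subr_ge0// ltW.
have : 0 <= pd * (1 - F - w1) by rewrite mulr_ge0//; lra.
have : 0 <= (c - u) * m by apply: mulr_ge0; [rewrite subr_ge0 ltW|exact: mass_ge0].
lra.
Qed.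

Let wHE_spread : wHE P' pd t.
Proof.
have [Ft_gt0 condexp_t condexp_gt] := HE.
have [F't m't] := spread_ray_lt t_lt_x.
have F't_gt0 : 0 < cdfG P' t by rewrite cdfGE F't.
split => //; first by rewrite /condexp_le cdfGE -/(moment P' _) F't m't.
move=> u tu; have Fu_gt0 := lt_le_trans Ft_gt0 (le_cdfG P (ltW tu)).
have F'u_gt0 := lt_le_trans F't_gt0 (le_cdfG P' (ltW tu)).
rewrite condexp_le_leP//.
have [ux|xu] := ltP u x.
  have [-> ->] := spread_ray_lt ux.
  by rewrite -condexp_le_leP// condexp_gt.
have [uc|cu] := ltP u c.
  have [-> ->] := spread_ray_mid xu uc.
  exact: moment_le_spread_mid.
by apply: (moment_ray_le_ge_mean P'ab pd_ge0); rewrite meanG_spread.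
Qed.

Let wP_integral_spread :
  Rintegral P' `[c, thh] (fun s => s - c) =
  Rintegral P `[c, thh] (fun s => s - c) + w1 * (c - x).
Proof.
have mcthh : measurable `[c, thh] by exact: measurable_itv.
have Acthh : A `<=` `[c, thh].
  by move=> s /A_sub/=; rewrite !in_itv/= => /andP[/ltW -> ->].
have x_out : \1_(`[c, thh]) x = 0 :> R.
  by rewrite indicE memNset//= in_itv/= leNgt x_lt_c.
have thh_in : \1_(`[c, thh]) thh = 1 :> R.
  by rewrite indicE mem_set//= in_itv/= lexx andbT ltW.
rewrite (Rintegral_subr P'ab _ mcthh) (Rintegral_subr Pab _ mcthh).
have := massP' mcthh; have := momentP' mcthh.
rewrite (setIidr Acthh) x_out thh_in !mulr0 mul0r !addr0 !mulr1.
rewrite -w_mass -w_moment => moment_eq mass_eq.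
have -> : mass P' `[c, thh] = mass P `[c, thh] - w1 by lra.
lra.
Qed.

Lemma spread_improves_feasible :
  let pt' := Rintegral P' `[c, thh] (fun s => s - c) in
  feasibleRE thl thh mu P' pt' pd t /\ objRE P pt pd t < objRE P' pt' pd t.
Proof.
split; first by split; [|exact: lexx|exact: wHE_spread|exact: meanG_spread].
have [_ wPP _ _] := feasP; move: wPP; rewrite /wP /objRE !cdfGE.
have [-> _] := spread_ray_lt t_lt_x.
rewrite wP_integral_spread.
have : 0 < w1 * (c - x) by rewrite mulr_gt0// subr_gt0.
lra.
Qed.

End spread_feasible.

Lemma two_point_weights (R : realFieldType) (m I x y : R) :
  x < y -> x * m < I -> I < y * m ->
  exists w1 w2, [/\ 0 < w1, 0 < w2, w1 + w2 = m & w1 * x + w2 * y = I].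
Proof.
move=> xy xI Iy; have yx_gt0 : 0 < y - x by rewrite subr_gt0.
exists ((y * m - I) / (y - x)), ((I - x * m) / (y - x)); split.
- by rewrite divr_gt0// subr_gt0.
- by rewrite divr_gt0// subr_gt0.
- by rewrite -mulrDl -[m in RHS](mulfK (lt0r_neq0 yx_gt0)); congr (_ / _); ring.
- by field; rewrite lt0r_neq0.
Qed.

Lemma spread_parameters (R : realFieldType) (t c s y m I : R) :
  t <= c -> s < y -> 0 <= m -> c * m < I -> I <= s * m ->
  I - c * m <= (c - t) * (1 - m) ->
  exists x, [/\ t < x, x < c, c - x <= I - c * m & exists w1 w2,
    [/\ 0 < w1, 0 < w2, w1 + w2 = m & w1 * x + w2 * y = I]].
Proof.
move=> t_le_c s_lt_y m_ge0 cm_lt_I I_le excess_le.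
have m_gt0 : 0 < m.
  rewrite lt_neqAle m_ge0 andbT; apply/eqP => m0.
  by move: cm_lt_I I_le; rewrite -m0 !mulr0; lra.
have c_lt_s : c < s by rewrite -(ltr_pM2r m_gt0); lra.
have : 0 <= (c - t) * m by rewrite mulr_ge0// subr_ge0.
have : 0 <= (I - c * m) * m by rewrite mulr_ge0// subr_ge0 ltW.
have : 0 < (y - s) * m by rewrite mulr_gt0// subr_gt0.
move=> ysm_gt0 excess_m ctm.
(* x lies below c by half the excess moment, which is at most c - t. *)
exists (c - (I - c * m) / 2); split; try lra.
by apply: two_point_weights; lra.
Qed.

Lemma spread_improves (R : realType) (thl thh mu : R)
  (P : probability R R) (pt pd t s : R) (A : set R) :
  0 <= thl -> feasibleRE thl thh mu P pt pd t ->
  measurable A -> A `<=` `]mu + pd, s] -> s < thh ->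
  (mu + pd) * mass P A < moment P A ->
  exists P' pt', feasibleRE thl thh mu P' pt' pd t /\
    objRE P pt pd t < objRE P' pt' pd t.
Proof.
move=> thl_ge0 feasP mA A_sub s_lt_thh excess_gt0; have [Pab _ HE meanP] := feasP.
have [Ft_gt0 _ _] := HE; have thl_le_t := cdfG_gt0_ge Pab Ft_gt0.
have A_gt_c : A `<=` ~` `]-oo, meanG P + pd].
  move=> z /A_sub/=; rewrite meanP !in_itv/= => /andP[cz _].
  by apply/negP; rewrite -ltNge.
have I_le : moment P A <= s * mass P A.
  by apply: (moment_le Pab) => // z /A_sub/=; rewrite in_itv/= => /andP[].
have := wHE_excess_le Pab HE mA A_gt_c; rewrite meanP => excess_le.
have t_le_c := wHE_le_mean Pab HE; rewrite meanP in t_le_c.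
have [x [t_lt_x x_lt_c x_ge [w1 [w2 [w1_gt0 w2_gt0 w_mass w_moment]]]]] :=
  spread_parameters t_le_c s_lt_thh (mass_ge0 P A) excess_gt0 I_le excess_le.
have c_lt_s : mu + pd < s.
  rewrite ltNge; apply/negP => /(ler_wpM2r (mass_ge0 P A)); lra.
have A_ab : A `<=` `[thl, thh].
  move=> z /A_sub/=; rewrite !in_itv/= => /andP[cz zs].
  by apply/andP; split; lra.
have x_ab : `[thl, thh] x by rewrite /= in_itv/=; apply/andP; split; lra.
have thh_ab : `[thl, thh] thh by rewrite /= in_itv/=; apply/andP; split; lra.
have [P' [P'ab massP' momentP']] := spread_exists thl_ge0 Pab mA A_ab x_ab thh_ab
  (ltW w1_gt0) (ltW w2_gt0) (esym w_mass).
have A_sub' : A `<=` `]mu + pd, thh].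
  move=> z /A_sub/=; rewrite !in_itv/= => /andP[-> zs].
  by rewrite (le_trans zs)// ltW.
exists P', (Rintegral P' `[mu + pd, thh] (fun s => s - (mu + pd))).
exact: (spread_improves_feasible feasP mA A_sub' t_lt_x x_lt_c x_ge w1_gt0
  (ltW w2_gt0) w_mass w_moment P'ab massP' momentP').
Qed.

Lemma feasibleRE_improvable (R : realType) (thl thh mu : R)
  (P : probability R R) (pt pd t s : R) :
  0 <= thl -> feasibleRE thl thh mu P pt pd t -> s < thh ->
  cdfG P (mu + pd) < cdfG P s ->
  exists P' pt', feasibleRE thl thh mu P' pt' pd t /\
    objRE P pt pd t < objRE P' pt' pd t.
Proof.
move=> thl_ge0 feasP s_lt_thh F_lt; have [Pab _ _ _] := feasP.
set c := mu + pd in F_lt *.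
have [e e_gt0 Fce_lt] := cdfG_right_continuous F_lt.
have ce_lt_s : c + e < s.
  by rewrite ltNge; apply: contraTN Fce_lt => /(le_cdfG P); rewrite -leNgt.
have ms : measurable `]-oo, s] by exact: measurable_itv.
have mce : measurable `]-oo, c + e] by exact: measurable_itv.
pose A := `]-oo, s] `\` `]-oo, c + e].
have mA : measurable A by exact: measurableD.
have A_sub : A `<=` `]c + e, s].
  by move=> z [/=]; rewrite !in_itv/= => -> /negP; rewrite -ltNge => ->.
have m_gt0 : 0 < mass P A.
  have := massID P ms mce; rewrite setIidr; first by rewrite -!cdfGE; lra.
  by move=> z/=; rewrite !in_itv/= => /le_trans->//; exact: ltW.
have I_ge : (c + e) * mass P A <= moment P A.
  apply: (moment_ge Pab mA) => z /A_sub/=.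
  by rewrite in_itv/= => /andP[/ltW].
have em_gt0 : 0 < e * mass P A by rewrite mulr_gt0.
apply: (spread_improves thl_ge0 feasP mA _ s_lt_thh).
  move=> z /A_sub/=; rewrite !in_itv/= => /andP[cez ->].
  by rewrite andbT (lt_trans _ cez)// ltrDl.
by rewrite -/c; lra.
Qed.

Theorem lemma8 (R : realType) (thl thh mu : R)
  (P : probability R R) (pt pd t : R) :
  0 <= thl -> thl < mu -> mu < thh ->
  feasibleRE thl thh mu P pt pd t ->
  (forall (P' : probability R R) (pt' pd' t' : R),
      feasibleRE thl thh mu P' pt' pd' t' ->
      objRE P' pt' pd' t' <= objRE P pt pd t) ->
  forall s : R, mu + pd <= s -> s < thh -> cdfG P s = cdfG P (mu + pd).
Proof.
move=> thl_ge0 _ _ feasP optP s c_le_s s_lt_thh.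
apply: le_anti; rewrite (le_cdfG P c_le_s) andbT leNgt; apply/negP => F_lt.
have [P' [pt' [feasP' improves]]] := feasibleRE_improvable thl_ge0 feasP s_lt_thh F_lt.
by move: (optP _ _ _ _ feasP'); rewrite leNgt improves.
Qed.
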